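(* Consider the system $\dot x(t)=f(x(t),u(t))$, $y(t)=h(x(t),u(t))$ with $x(t)\in X\subset\mathbb{R}^n$, $u(t)\in U\subset\mathbb{R}^m$, $y(t)\in Y\subset\mathbb{R}^m$, and let $\phi(t,t_0,x_0,u_{t_0:t})$ denote the state at time $t$ from $x_0$ at time $t_0$ under input $u_{t_0:t}$. Let $S:X\to\mathbb{R}_{\ge0}$ with $S(\mathbf{0})=0$ be a storage function, and for $t_1>t_0\ge0$, $x_0\in X$, $u_{t_0:t_1}\subset U$, with output $y$ and $x_1=\phi(t_1,t_0,x_0,u_{t_0:t_1})$, put $$\psi_\gamma=\frac{\int_{t_0}^{t_1}y^\mathsf{T}y\,dt+(S(x_1)-S(x_0))}{\int_{t_0}^{t_1}u^\mathsf{T}u\,dt},\quad \psi_\nu=\frac{\int_{t_0}^{t_1}u^\mathsf{T}y\,dt-(S(x_1)-S(x_0))}{\int_{t_0}^{t_1}u^\mathsf{T}u\,dt},\quad \psi_\rho=\frac{\int_{t_0}^{t_1}u^\mathsf{T}y\,dt-(S(x_1)-S(x_0))}{\int_{t_0}^{t_1}y^\mathsf{T}y\,dt}$$ (whenever the denominator is nonzero), and $\gamma_*^2=\max\psi_\gamma$, $\nu_*=\min\psi_\nu$, $\rho_*=\min\psi_\rho$ over all such tuples with nonzero denominator. Let $(u(t),y(t))$, $t\in[t_o,t_f)$, be a given input-output profile with state trajectory $x(t)$ such that $|\tfrac{d}{dt}S(x(t))|\le K_s$ for $t\in[t_o,t_f)$, and let $\tilde\Psi_u=\{t\in[t_o,t_f):u(t)=0\}$,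 $\tilde\Psi_y=\{t\in[t_o,t_f):y(t)=0\}$. Define $$\hat\gamma_*^2=\max_{t\in[t_o,t_f)\setminus\tilde\Psi_u}\frac{y^\mathsf{T}(t)y(t)-K_s}{u^\mathsf{T}(t)u(t)},\quad \hat\nu_*=\min_{t\in[t_o,t_f)\setminus\tilde\Psi_u}\frac{u^\mathsf{T}(t)y(t)+K_s}{u^\mathsf{T}(t)u(t)},\quad \hat\rho_*=\min_{t\in[t_o,t_f)\setminus\tilde\Psi_y}\frac{u^\mathsf{T}(t)y(t)+K_s}{y^\mathsf{T}(t)y(t)}.$$ Then $\hat\gamma_*^2\le\gamma_*^2$, $\hat\nu_*\ge\nu_*$ and $\hat\rho_*\ge\rho_*$.
   Context: $\gamma_*^2,\nu_*,\rho_*$ are the paper's optimal $\mathcal{L}_2$-gain (squared), input feedforward passivity index and output feedback passivity index of the system, expressed through the storage function $S$; $\hat\gamma_*^2,\hat\nu_*,\hat\rho_*$ are the proposed on-line estimates. *)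

From HB Require Import structures.
From mathcomp Require Import all_boot all_order all_algebra.
From mathcomp Require Import all_classical all_reals all_analysis.
Set Implicit Arguments. Unset Strict Implicit. Unset Printing Implicit Defensive.
Import Order.TTheory GRing.Theory Num.Theory.
Import numFieldNormedType.Exports.
Local Open Scope classical_set_scope.
Local Open Scope ring_scope.

Definition vdot (R : realType) (k : nat) (a b : 'rV[R]_k) : R :=
  \sum_(i < k) a ord0 i * b ord0 i.

Definition Rint (R : realType) (t0 t1 : R) (g : R -> R) : R :=
  \int[lebesgue_measure]_(s in `[t0, t1]) g s.

Definition admissible (R : realType) (n m : nat)
    (f : 'rV[R]_n -> 'rV[R]_m -> 'rV[R]_n)
    (X : set 'rV[R]_n) (U : set 'rV[R]_m)
    (t0 t1 : R) (x : R -> 'rV[R]_n) (u : R -> 'rV[R]_m) : Prop :=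
  0 <= t0 /\ t0 < t1 /\
  (forall s, t0 <= s <= t1 -> X (x s) /\ U (u s)) /\
  {within `[t0, t1], continuous u} /\
  {within `[t0, t1], continuous x} /\
  (forall s, t0 < s < t1 -> is_derive s 1 x (f (x s) (u s))).

Section Indices.
Variables (R : realType) (n m : nat)
  (f : 'rV[R]_n -> 'rV[R]_m -> 'rV[R]_n) (h : 'rV[R]_n -> 'rV[R]_m -> 'rV[R]_m)
  (S : 'rV[R]_n -> R).

Definition Iuu t0 t1 (u : R -> 'rV[R]_m) := Rint t0 t1 (fun s => vdot (u s) (u s)).
Definition Iyy t0 t1 x (u : R -> 'rV[R]_m) :=
  Rint t0 t1 (fun s => vdot (h (x s) (u s)) (h (x s) (u s))).
Definition Iuy t0 t1 x (u : R -> 'rV[R]_m) :=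
  Rint t0 t1 (fun s => vdot (u s) (h (x s) (u s))).

Definition psi_gamma t0 t1 x u :=
  (Iyy t0 t1 x u + (S (x t1) - S (x t0))) / Iuu t0 t1 u.
Definition psi_nu t0 t1 x u :=
  (Iuy t0 t1 x u - (S (x t1) - S (x t0))) / Iuu t0 t1 u.
Definition psi_rho t0 t1 x u :=
  (Iuy t0 t1 x u - (S (x t1) - S (x t0))) / Iyy t0 t1 x u.

Definition gamma_star2 X U : \bar R :=
  ereal_sup [set e | exists t0 t1 x u, admissible f X U t0 t1 x u /\
     Iuu t0 t1 u != 0 /\ e = (psi_gamma t0 t1 x u)%:E].
Definition nu_star X U : \bar R :=
  ereal_inf [set e | exists t0 t1 x u, admissible f X U t0 t1 x u /\
     Iuu t0 t1 u != 0 /\ e = (psi_nu t0 t1 x u)%:E].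
Definition rho_star X U : \bar R :=
  ereal_inf [set e | exists t0 t1 x u, admissible f X U t0 t1 x u /\
     Iyy t0 t1 x u != 0 /\ e = (psi_rho t0 t1 x u)%:E].
End Indices.

Definition gamma_hat2 (R : realType) (m : nat) (u y : R -> 'rV[R]_m)
    (to tf Ks : R) : \bar R :=
  ereal_sup [set e | exists t, to <= t < tf /\ u t != 0 /\
     e = ((vdot (y t) (y t) - Ks) / vdot (u t) (u t))%:E].
Definition nu_hat (R : realType) (m : nat) (u y : R -> 'rV[R]_m)
    (to tf Ks : R) : \bar R :=
  ereal_inf [set e | exists t, to <= t < tf /\ u t != 0 /\
     e = ((vdot (u t) (y t) + Ks) / vdot (u t) (u t))%:E].
Definition rho_hat (R : realType) (m : nat) (u y : R -> 'rV[R]_m)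
    (to tf Ks : R) : \bar R :=
  ereal_inf [set e | exists t, to <= t < tf /\ y t != 0 /\
     e = ((vdot (u t) (y t) + Ks) / vdot (y t) (y t))%:E].

From Pilot Require Import Defs.
From HB Require Import structures.
From mathcomp Require Import all_boot all_order all_algebra.
From mathcomp Require Import all_classical all_reals all_analysis.
From mathcomp Require Import lra.
Set Implicit Arguments. Unset Strict Implicit. Unset Printing Implicit Defensive.
Import Order.TTheory GRing.Theory Num.Theory.
Import numFieldNormedType.Exports.
Local Open Scope classical_set_scope.
Local Open Scope ring_scope.

(* Fix a time t of the profile with u(t) <> 0 and a level w below the pointwise
   ratio (y'y - Ks) / u'u at t.  By continuity, y'y - w u'u > Ks on a short
   window [t, t + d]; integrating, and bounding the storage increment from below
   by -Ks d with the mean value theorem, shows that this window has psi_gamma >= w,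
   hence gamma_*^2 >= w.  Windows are shifted to start at time 0, since admissible
   trajectories must start at a nonnegative time while to may be negative.  The
   passivity indices are symmetric: u'y + Ks < w q with q = u'u (resp. y'y)
   persists on a window, giving psi_nu <= w (resp. psi_rho <= w). *)

Lemma vdot_ge0 (R : realType) k (a : 'rV[R]_k) : 0 <= vdot a a.
Proof. by rewrite sumr_ge0 // => i _; rewrite -expr2 sqr_ge0. Qed.

Lemma vdot_gt0 (R : realType) k (a : 'rV[R]_k) : a != 0 -> 0 < vdot a a.
Proof.
move=> a_neq0; rewrite lt_def vdot_ge0 andbT; apply: contra a_neq0 => /eqP a2_eq0.
have /psumr_eq0P a_eq0 : \sum_(i < k) a ord0 i ^+ 2 = 0 := a2_eq0.
apply/eqP/matrixP => i j; rewrite (ord1 i) mxE.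
by apply/eqP; rewrite -sqrf_eq0 a_eq0 // => l _; rewrite sqr_ge0.
Qed.

Lemma continuous_vdot (R : realType) k (A : set R) (a b : R -> 'rV[R]_k) :
  {within A, continuous a} -> {within A, continuous b} ->
  {within A, continuous (fun s => vdot (a s) (b s))}.
Proof.
move=> ca cb.
apply: (@continuous_big _ _ +%R 0 predT add_continuous (subspace A) _
   (fun i (s : subspace A) => a s ord0 i * b s ord0 i)) => i _ s.
apply: continuousM.
- exact: (continuous_comp (ca s) (@coord_continuous R 1 k ord0 i (a s))).
- exact: (continuous_comp (cb s) (@coord_continuous R 1 k ord0 i (b s))).
Qed.

Lemma within_continuous_compW (T U V : topologicalType) (A : set T) (B : set U)
    (phi : T -> U) (g : U -> V) :
  continuous phi -> phi @` A `<=` B -> {within B, continuous g} ->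
  {within A, continuous (g \o phi)}.
Proof.
move=> cphi AB /subspace_continuousP cg; apply/subspace_continuousP => s As.
apply: (cvg_comp phi g _ (cg _ (AB _ (imageP _ As)))).
move=> W; rewrite /within /= !nbhs_simpl => /(cphi s) BW /=.
have {}BW : \forall z \near s, B (phi z) -> W (phi z) := BW.
near=> z => Az; apply: (near BW z) => //; exact: AB.
Unshelve. all: by end_near.
Qed.

Lemma within_continuous_shift (R : realType) (V : topologicalType) (g : R -> V)
    (a b t d : R) :
  a <= t -> t + d < b -> {within `[a, b[, continuous g} ->
  {within `[0, d], continuous (g \o shift t)}.
Proof.
move=> le_at tdb; apply: within_continuous_compW.
  by move=> s; apply: continuousD; [exact: cvg_id | exact: cvg_cst].
move=> _ [s + <-]; rewrite /= !in_itv /= => /andP[s0 sd].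
by rewrite (le_trans le_at) ?lerDr //= (le_lt_trans _ tdb) // addrC lerD2l.
Qed.

Lemma is_derive_shift_comp (R : realType) (V : normedModType R) (x : R -> V)
    (c s : R) (dx : V) :
  is_derive (s + c) 1 x dx -> is_derive s 1 (x \o shift c) dx.
Proof.
move=> [x_der <-].
have E : (fun h : R => h^-1 *: ((x \o shift c \o shift s) (h *: 1) - x (s + c))) =
         (fun h : R => h^-1 *: ((x \o shift (s + c)) (h *: 1) - x (s + c))).
  by apply/funext => h /=; rewrite addrA.
by apply: DeriveDef; rewrite /derivable /derive /= E.
Qed.

Lemma ler_norm_increment (R : realType) (g : R -> R) (a b K : R) :
  a < b -> {within `[a, b], continuous g} ->
  (forall s, a < s < b -> derivable g s 1 /\ `|'D_1 g s| <= K) ->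
  `|g b - g a| <= K * (b - a).
Proof.
move=> ab cg dg.
have g_der s : s \in `]a, b[ -> is_derive s 1 g ('D_1 g s).
  by rewrite in_itv => /dg[/derivableP].
have [c /[!in_itv] /= c_ab ->] := MVT ab g_der cg.
rewrite normrM [`|b - a|]ger0_norm ?subr_ge0 ?(ltW ab) //.
by rewrite ler_wpM2r ?subr_ge0 ?(ltW ab) // (dg c c_ab).2.
Qed.

Section WithinContinuity.
Variables (R : realType) (A : set R).

Lemma within_continuousMl (c : R) (g : R -> R) :
  {within A, continuous g} -> {within A, continuous (fun s => c * g s)}.
Proof. by move=> cg s; apply: continuousM; [exact: cst_continuous | exact: cg]. Qed.

Lemma within_continuous_lincomb (p q : R -> R) (alpha beta : R) :
  {within A, continuous p} -> {within A, continuous q} ->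
  {within A, continuous (fun s => alpha * p s - beta * q s)}.
Proof.
by move=> cp cq; exact: within_continuousB (within_continuousMl (c := alpha) cp)
  (within_continuousMl (c := beta) cq).
Qed.

End WithinContinuity.

Section SegmentIntegral.
Variables (R : realType) (a b : R).

Lemma continuous_segment_integrable (g : R -> R) :
  {within `[a, b], continuous g} ->
  (@lebesgue_measure R).-integrable `[a, b] (EFin \o g).
Proof. by apply: continuous_compact_integrable; exact: segment_compact. Qed.

Lemma RintB (p q : R -> R) :
  {within `[a, b], continuous p} -> {within `[a, b], continuous q} ->
  Defs.Rint a b (fun s => p s - q s) = Defs.Rint a b p - Defs.Rint a b q.
Proof.
by move=> cp cq; rewrite /Defs.Rint RintegralB //; exact: continuous_segment_integrable.
Qed.

Lemma RintZl (c : R) (q : R -> R) : {within `[a, b], continuous q} ->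
  Defs.Rint a b (fun s => c * q s) = c * Defs.Rint a b q.
Proof.
by move=> cq; rewrite /Defs.Rint RintegralZl //; exact: continuous_segment_integrable.
Qed.

Lemma Rint_ge_cst (c : R) (g : R -> R) : a < b ->
  {within `[a, b], continuous g} -> (forall s, a <= s <= b -> c <= g s) ->
  c * (b - a) <= Defs.Rint a b g.
Proof.
move=> ab cg cg_le; rewrite /Defs.Rint.
have -> : c * (b - a) = \int[lebesgue_measure]_(s in `[a, b]) c.
  rewrite Rintegral_cst //; have := @lebesgue_measure_itv R `[a, b].
  by rewrite /= lte_fin ab => ->; rewrite -EFinB.
apply: le_Rintegral => //; apply: continuous_segment_integrable => //.
exact/continuous_subspaceT/cst_continuous.
Qed.

End SegmentIntegral.

Section RightWindow.
Variables (R : realType) (g : R -> R) (a b t K : R).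
Hypotheses (cg : {within `[a, b[, continuous g}) (t_ab : a <= t < b) (Kg : K < g t).

Lemma near_right_shift_gt :
  \forall d \near 0^'+, t + d < b /\ forall s, 0 <= s <= d -> K < g (s + t).
Proof.
have /andP[le_at tb] := t_ab.
have t_in : [set` `[a, b[] t by rewrite /= in_itv.
have /subspace_continuousP/(_ t t_in) cgt := cg.
have Kg_near : \forall s \near within [set` `[a, b[] (nbhs t), K < g s.
  exact: cvgr_gt cgt _ Kg.
have {Kg_near} : \forall s \near t, [set` `[a, b[] s -> K < g s := Kg_near.
case/nbhs_ballP => e e_gt0 Kg_ball.
near=> d.
have tdb : t + d < b.
  by rewrite -ltrBrDl; near: d; apply: nbhs_right_lt; rewrite subr_gt0.
split=> // s /andP[s0 sd]; apply: Kg_ball.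
- rewrite /ball /= distrC addrK ger0_norm //; apply: le_lt_trans sd _.
  by near: d; exact: nbhs_right_lt.
- by rewrite /= in_itv /= (le_trans le_at) ?lerDr //= (le_lt_trans _ tdb) // addrC lerD2l.
Unshelve. all: by end_near.
Qed.

Lemma near_right_Rint_ge :
  \forall d \near 0^'+, t + d < b /\ K * d <= Defs.Rint 0 d (g \o shift t).
Proof.
apply: filterS (filterI near_right_shift_gt (nbhs_right_gt 0)) => d [[tdb Kg_d] d0].
split=> //; rewrite -[d in K * d]subr0; apply: Rint_ge_cst => //.
- by apply: within_continuous_shift cg; case/andP: t_ab.
- by move=> s /Kg_d/ltW.
Qed.

End RightWindow.

Lemma exists_right_window (R : realType) (p q r : R -> R) (a b t K alpha beta : R) :
  {within `[a, b[, continuous p} -> {within `[a, b[, continuous q} ->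
  {within `[a, b[, continuous r} ->
  a <= t < b -> K < alpha * p t - beta * q t -> 0 < r t ->
  exists d, [/\ 0 < d, t + d < b, 0 < Defs.Rint 0 d (r \o shift t) &
    K * d <= alpha * Defs.Rint 0 d (p \o shift t) - beta * Defs.Rint 0 d (q \o shift t)].
Proof.
move=> cp cq cr t_ab Kpq r_gt0; have /andP[le_at _] := t_ab.
have cpq := within_continuous_lincomb (alpha := alpha) (beta := beta) cp cq.
have half_r : r t / 2 < r t by lra.
have [d [[tdb Kd_le] [[_ r_ge] d_gt0]]] := filter_ex (filterI
  (near_right_Rint_ge cpq t_ab Kpq)
  (filterI (near_right_Rint_ge cr t_ab half_r) (nbhs_right_gt 0))).
exists d; split=> //.
  by apply: lt_le_trans r_ge; rewrite mulr_gt0 ?divr_gt0.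
have cp' := within_continuous_shift le_at tdb cp.
have cq' := within_continuous_shift le_at tdb cq.
by rewrite /comp RintB ?RintZl // in Kd_le; exact: within_continuousMl.
Qed.

Section Profile.
Variables (R : realType) (n m : nat)
  (f : 'rV[R]_n -> 'rV[R]_m -> 'rV[R]_n) (h : 'rV[R]_n -> 'rV[R]_m -> 'rV[R]_m)
  (X : set 'rV[R]_n) (U : set 'rV[R]_m) (S : 'rV[R]_n -> R)
  (x : R -> 'rV[R]_n) (u y : R -> 'rV[R]_m) (to tf Ks : R).
Hypotheses
  (HXU : forall t, to <= t < tf -> X (x t) /\ U (u t))
  (Hy : forall t, to <= t < tf -> y t = h (x t) (u t))
  (Hxc : {within `[to, tf[, continuous x})
  (Hode : forall t, to < t < tf -> is_derive t 1 x (f (x t) (u t)))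
  (Huc : {within `[to, tf[, continuous u})
  (Hyc : {within `[to, tf[, continuous y})
  (HSc : {within `[to, tf[, continuous (S \o x)})
  (HSd : forall t, to < t < tf ->
     derivable (S \o x) t 1 /\ `| 'D_1 (S \o x) t | <= Ks).

Local Notation uu := (fun s => vdot (u s) (u s)).
Local Notation yy := (fun s => vdot (y s) (y s)).
Local Notation uy := (fun s => vdot (u s) (y s)).

Section Window.
Variables (t d : R).
Hypotheses (le_tot : to <= t) (d_gt0 : 0 < d) (tdf : t + d < tf).

Let window_in s : 0 <= s <= d -> to <= s + t < tf.
Proof.
case/andP=> s_ge0 s_led.
by rewrite (le_trans le_tot) ?lerDr //= (le_lt_trans _ tdf) // addrC lerD2l.
Qed.

Lemma window_admissible : admissible f X U 0 d (x \o shift t) (u \o shift t).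
Proof.
split=> //; split=> //; split; [|split; [|split]].
- by move=> s /window_in/HXU.
- exact: within_continuous_shift Huc.
- exact: within_continuous_shift Hxc.
- move=> s /andP[s_gt0 s_ltd]; apply/is_derive_shift_comp/Hode.
  have /andP[_ ->] : to <= s + t < tf by rewrite window_in // ltW ?s_gt0 ?ltW.
  by rewrite andbT (le_lt_trans le_tot) // ltrDr.
Qed.

Lemma window_storage_ge : - (Ks * d) <= S ((x \o shift t) d) - S ((x \o shift t) 0).
Proof.
have t_lt : t < t + d by rewrite ltrDl.
have cS : {within `[t, t + d], continuous (S \o x)}.
  apply: continuous_subspaceW HSc => s /=; rewrite !in_itv /= => /andP[ts std].
  by rewrite (le_trans le_tot ts) (le_lt_trans std tdf).
have dS s : t < s < t + d -> derivable (S \o x) s 1 /\ `|'D_1 (S \o x) s| <= Ks.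
  case/andP=> ts std; apply: HSd.
  by rewrite (le_lt_trans le_tot ts) (lt_trans std tdf).
have := ler_norm_increment t_lt cS dS.
by rewrite /= add0r (addrC t d) addrK ler_norml => /andP[].
Qed.

Lemma window_output s : 0 <= s <= d ->
  h ((x \o shift t) s) ((u \o shift t) s) = (y \o shift t) s.
Proof. by move=> /window_in/Hy <-. Qed.

Lemma window_Iyy : Iyy h 0 d (x \o shift t) (u \o shift t) = Defs.Rint 0 d (yy \o shift t).
Proof. by apply: eq_Rintegral => s /[!inE] /window_output /= ->. Qed.

Lemma window_Iuy : Iuy h 0 d (x \o shift t) (u \o shift t) = Defs.Rint 0 d (uy \o shift t).
Proof. by apply: eq_Rintegral => s /[!inE] /window_output /= ->. Qed.

End Window.

Lemma window_gain t e : to <= t < tf -> u t != 0 -> 0 < e ->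
  exists d, [/\ 0 < d, t + d < tf, Iuu 0 d (u \o shift t) != 0 &
    (yy t - Ks) / uu t - e <= psi_gamma h S 0 d (x \o shift t) (u \o shift t)].
Proof.
move=> tI /vdot_gt0 uu_gt0 e_gt0; set w := _ - e.
have w_lt : w * uu t < yy t - Ks by rewrite -ltr_pdivlMr // gtrBl.
have margin : Ks < 1 * yy t - w * uu t by lra.
have cuu := continuous_vdot Huc Huc.
have [d [d_gt0 tdf Iuu_gt0 gain]] :=
  exists_right_window (continuous_vdot Hyc Hyc) cuu cuu tI margin uu_gt0.
have /andP[le_tot _] := tI.
exists d; split=> //; first exact: lt0r_neq0.
rewrite /psi_gamma window_Iyy // ler_pdivlMr //.
have := window_storage_ge le_tot d_gt0 tdf.
by move: gain; rewrite mul1r /Iuu /=; lra.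
Qed.

Lemma window_passivity (q : R -> R) t e : {within `[to, tf[, continuous q} ->
  to <= t < tf -> 0 < q t -> 0 < e ->
  exists d, [/\ 0 < d, t + d < tf, 0 < Defs.Rint 0 d (q \o shift t) &
    (Iuy h 0 d (x \o shift t) (u \o shift t) - (S ((x \o shift t) d) - S ((x \o shift t) 0)))
      / Defs.Rint 0 d (q \o shift t) <= (uy t + Ks) / q t + e].
Proof.
move=> cq tI q_gt0 e_gt0; set w := _ + e.
have w_gt : uy t + Ks < w * q t by rewrite -ltr_pdivrMr // ltrDl.
have margin : Ks < w * q t - 1 * uy t by lra.
have [d [d_gt0 tdf Iq_gt0 passivity]] :=
  exists_right_window cq (continuous_vdot Huc Hyc) cq tI margin q_gt0.
have /andP[le_tot _] := tI.
exists d; split=> //.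
rewrite window_Iuy // ler_pdivrMr //.
have := window_storage_ge le_tot d_gt0 tdf.
by move: passivity; rewrite mul1r; lra.
Qed.

Lemma gamma_hat2_le_star : (gamma_hat2 u y to tf Ks <= gamma_star2 f h S X U)%E.
Proof.
apply/ereal_supP => _ [t [tI [ut_neq0 ->]]].
apply/lee_subgt0Pr => e e_gt0; rewrite -EFinB.
have [d [d_gt0 tdf Iuu_neq0 psi_ge]] := window_gain tI ut_neq0 e_gt0.
have /andP[le_tot _] := tI.
apply: (le_trans (y := (psi_gamma h S 0 d (x \o shift t) (u \o shift t))%:E)).
  by rewrite lee_fin.
apply: ereal_sup_ubound; exists 0, d, (x \o shift t), (u \o shift t).
by split; first exact: window_admissible.
Qed.

Lemma nu_star_le_hat : (nu_star f h S X U <= nu_hat u y to tf Ks)%E.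
Proof.
apply/ereal_infP => _ [t [tI [ut_neq0 ->]]].
apply/lee_addgt0Pr => e e_gt0; rewrite -EFinD.
have [d [d_gt0 tdf Iuu_gt0 psi_le]] :=
  window_passivity (continuous_vdot Huc Huc) tI (vdot_gt0 ut_neq0) e_gt0.
have /andP[le_tot _] := tI.
apply: (le_trans (y := (psi_nu h S 0 d (x \o shift t) (u \o shift t))%:E)).
  apply: ereal_inf_lbound; exists 0, d, (x \o shift t), (u \o shift t).
  by split; first exact: window_admissible; split; first exact: lt0r_neq0.
by rewrite lee_fin.
Qed.

Lemma rho_star_le_hat : (rho_star f h S X U <= rho_hat u y to tf Ks)%E.
Proof.
apply/ereal_infP => _ [t [tI [yt_neq0 ->]]].
apply/lee_addgt0Pr => e e_gt0; rewrite -EFinD.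
have [d [d_gt0 tdf Iyy_gt0 psi_le]] :=
  window_passivity (continuous_vdot Hyc Hyc) tI (vdot_gt0 yt_neq0) e_gt0.
have /andP[le_tot _] := tI.
apply: (le_trans (y := (psi_rho h S 0 d (x \o shift t) (u \o shift t))%:E)).
  apply: ereal_inf_lbound; exists 0, d, (x \o shift t), (u \o shift t).
  split; first exact: window_admissible.
  by rewrite window_Iyy //; split; first exact: lt0r_neq0.
by rewrite lee_fin /psi_rho window_Iyy.
Qed.

End Profile.

Theorem theorem3 (R : realType) (n m : nat)
  (f : 'rV[R]_n -> 'rV[R]_m -> 'rV[R]_n) (h : 'rV[R]_n -> 'rV[R]_m -> 'rV[R]_m)
  (X : set 'rV[R]_n) (U : set 'rV[R]_m) (S : 'rV[R]_n -> R)
  (HS0 : forall z, X z -> 0 <= S z) (HS00 : S 0 = 0)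
  (x : R -> 'rV[R]_n) (u y : R -> 'rV[R]_m) (to tf Ks : R)
  (Hto : to < tf)
  (HXU : forall t, to <= t < tf -> X (x t) /\ U (u t))
  (Hy : forall t, to <= t < tf -> y t = h (x t) (u t))
  (Hxc : {within `[to, tf[, continuous x})
  (Hode : forall t, to < t < tf -> is_derive t 1 x (f (x t) (u t)))
  (Huc : {within `[to, tf[, continuous u})
  (Hyc : {within `[to, tf[, continuous y})
  (HSc : {within `[to, tf[, continuous (S \o x)})
  (HSd : forall t, to < t < tf ->
     derivable (S \o x) t 1 /\ `| 'D_1 (S \o x) t | <= Ks) :
  (gamma_hat2 u y to tf Ks <= gamma_star2 f h S X U)%E /\
  (nu_star f h S X U <= nu_hat u y to tf Ks)%E /\
  (rho_star f h S X U <= rho_hat u y to tf Ks)%E.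
Proof.
split; first exact: gamma_hat2_le_star HXU Hy Hxc Hode Huc Hyc HSc HSd.
split; first exact: nu_star_le_hat HXU Hy Hxc Hode Huc Hyc HSc HSd.
exact: rho_star_le_hat HXU Hy Hxc Hode Huc Hyc HSc HSd.
Qed.
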